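(* Let $E\in(-2,2)$, $k=\arccos(-E/2)\in(0,\pi)$, let $w_\sigma$ be a compactly supported real random variable on a probability space $(\Sigma,\mathbb P)$, let $\delta\in\mathbb R$, and let $$T^{\epsilon,\delta}_\sigma=\begin{pmatrix}e^{-\imath k}&0\\0&e^{\imath k}\end{pmatrix}\exp\Big[\frac{\imath\delta+\epsilon w_\sigma}{2\sin(k)}(B_2+B_3)\Big].$$ If $\epsilon\ne0$ and the support of $w_\sigma$ contains more than one point, then the support of $T^{\epsilon,\delta}_\sigma$ is strongly irreducible, i.e. every finite set $F\subset\overline{\mathbb C}$ satisfies $\mathrm{supp}(T^{\epsilon,\delta}_\sigma)\cdot F\not\subset F$.
   Context: $B_2=\begin{pmatrix}0&\imath\\-\imath&0\end{pmatrix}$, $B_3=\begin{pmatrix}\imath&0\\0&-\imath\end{pmatrix}$. For $T=\begin{pmatrix}a&b\\c&d\end{pmatrix}$ with $\det T=1$, the Möbius action on $\overline{\mathbb C}=\mathbb C\cup\{\infty\}$ is $T\cdot z=\frac{az+b}{cz+d}$; $\mathrm{supp}(T^{\epsilon,\delta}_\sigma)$ is the support of the distribution of the random matrix, and $\mathrm{supp}(T^{\epsilon,\delta}_\sigma)\cdot F=\{T\cdot z:T\in\mathrm{supp}(T^{\epsilon,\delta}_\sigma),z\in F\}$. (These matrices are the single-site Anderson transfer matrices at energy $E+\epsilon(\cdot)-\imath\delta$ after the basis change to $\mathrm{SU}(1,1)$ form.) *)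

From HB Require Import structures.
From mathcomp Require Import all_boot all_order all_algebra.
From mathcomp Require Import all_classical all_reals all_analysis.
From mathcomp.real_closed Require Import complex.
Set Implicit Arguments. Unset Strict Implicit. Unset Printing Implicit Defensive.
Import Order.TTheory GRing.Theory Num.Theory.
Import numFieldNormedType.Exports.
Local Open Scope classical_set_scope.
Local Open Scope ring_scope.
Local Open Scope complex_scope.

Section Defs.
Variable R : realType.
Local Notation C := (R[i]).

Definition cmod (z : C) : R := Num.sqrt (complex.Re z ^+ 2 + complex.Im z ^+ 2).

Definition mx22 (a b c d : C) : 'M[C]_2 :=
  \matrix_(i < 2, j < 2)
    if (i : nat) == 0%N then (if (j : nat) == 0%N then a else b)
    else (if (j : nat) == 0%N then c else d).

Definition B2 : 'M[C]_2 := mx22 0 'i (- 'i) 0.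
Definition B3 : 'M[C]_2 := mx22 'i 0 0 (- 'i).

Definition mexp_psum (A : 'M[C]_2) (N : nat) : 'M[C]_2 :=
  \sum_(n < N) ((n`!)%:R)^-1 *: A ^+ n.

Definition mexp (A : 'M[C]_2) : 'M[C]_2 :=
  \matrix_(i < 2, j < 2)
    (limn (fun N => complex.Re (mexp_psum A N i j)) +i* limn (fun N => complex.Im (mexp_psum A N i j))).

Definition ephase (t : R) : C := cos t +i* sin t.

Definition kE (E : R) : R := acos (- E / 2).

(* the transfer matrix T^{eps,delta} for the value x of w_sigma *)
Definition transfer (E eps delta x : R) : 'M[C]_2 :=
  let k := kE E in
  mx22 (ephase (- k)) 0 0 (ephase k) *m
  mexp ((('i * delta%:C + (eps * x)%:C) / (2 * sin k)%:C) *: (B2 + B3)).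

(* Riemann sphere: None is the point at infinity *)
Definition sphere := option C.

(* Moebius action (det = 1 assumed by the context; conventions at infinity) *)
Definition mobius (M : 'M[C]_2) (z : sphere) : sphere :=
  let a := M ord0 ord0 in let b := M ord0 ord_max in
  let c := M ord_max ord0 in let d := M ord_max ord_max in
  match z with
  | Some z => if c * z + d == 0 then None else Some ((a * z + b) / (c * z + d))
  | None => if c == 0 then None else Some (a / c)
  end.

Definition mxdist (M N : 'M[C]_2) : R := \sum_i \sum_j cmod (M i j - N i j).

End Defs.

Definition supp_rv (R : realType) (d : measure_display) (T : measurableType d)
  (P : probability T R) (w : T -> R) : set R :=
  [set x | forall e : R, 0 < e -> (0 < P [set s | (`|w s - x| < e)%R])%E].

Definition supp_mx (R : realType) (d : measure_display) (T : measurableType d)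
  (P : probability T R) (Tm : T -> 'M[R[i]]_2) : set 'M[R[i]]_2 :=
  [set M | forall e : R, 0 < e -> (0 < P [set s | (mxdist (Tm s) M < e)%R])%E].

From HB Require Import structures.
From mathcomp Require Import all_boot all_order all_algebra.
From mathcomp Require Import all_classical all_reals all_analysis.
From mathcomp.real_closed Require Import complex.
From mathcomp Require Import ring lra.
Import Order.TTheory GRing.Theory Num.Theory.
Import numFieldNormedType.Exports.
Local Open Scope classical_set_scope.
Local Open Scope ring_scope.
Set Implicit Arguments. Unset Strict Implicit.

(* Since N := B2 + B3 satisfies N^2 = 0, the transfer matrix is
   T_x = diag(e^{-ik}, e^{ik}) (1 + c_x N) with c_x affine in x of slope
   eps / (2 sin k) != 0; in particular x |-> T_x dilates distances by a constant
   factor, so T_x lies in the support of T whenever x lies in that of w.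
   In the chart u = 1/(z+1), which sends the common fixed point -1 of the
   factors 1 + c_x N to infinity, 1 + c_x N acts as the translation by -i c_x.
   If a finite set F were invariant under T_x and T_y for two support points
   x != y, both would permute F, hence so would T_x^-1 T_y, which in the chart
   is a nonzero translation; so F = {-1}. But T_x maps -1 to -e^{-2ik} != -1. *)

Lemma translate_stable_seq_nil (K : numDomainType) (s : K) (G : seq K) :
  s != 0 -> (forall v, v \in G -> v + s \in G) -> G = [::].
Proof.
move=> s0 stableG; case: G stableG => [//|v0 G] stableG; exfalso.
pose orbit := mkseq (fun n => v0 + n%:R * s) (size G).+2.
have orbit_uniq : uniq orbit.
  apply: mkseq_uniq => m n /addrI /(mulIf s0) /eqP.
  by rewrite eqr_nat => /eqP.
have orbit_sub : {subset orbit <= v0 :: G}.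
  move=> _ /mapP[n _ ->]; elim: n => [|n IHn]; first by rewrite mul0r addr0 mem_head.
  by rewrite mulrSr mulrDl mul1r addrA stableG.
by have := uniq_leq_size orbit_uniq orbit_sub; rewrite size_mkseq /= ltnn.
Qed.

Lemma mem_stable_inj_onto (T : eqType) (f : T -> T) (F : seq T) :
  injective f -> (forall z, z \in F -> f z \in F) ->
  forall z', z' \in F -> exists2 z, z \in F & z' = f z.
Proof.
move=> f_inj stableF z' z'F.
have sub : {subset map f (undup F) <= undup F}.
  by move=> _ /mapP[z zF ->]; rewrite mem_undup stableF // -mem_undup.
have img_uniq : uniq (map f (undup F)) by rewrite map_inj_uniq // undup_uniq.
have [_ eq_img] := uniq_min_size img_uniq sub (eq_leq (esym (size_map f _))).
have : z' \in map f (undup F) by rewrite eq_img mem_undup.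
by case/mapP => z zF ->; exists z; rewrite // -mem_undup.
Qed.

Section Transfer.
Variable R : realType.
Local Notation C := (R[i]).
Local Open Scope complex_scope.

Lemma mexp_psum_sqr0 (A : 'M[C]_2) n : A * A = 0 -> mexp_psum A n.+2 = 1 + A.
Proof.
move=> A2; rewrite /mexp_psum !big_ord_recl big1 ?addr0.
  by rewrite /= expr0 expr1 !fact0 invr1 !scale1r.
by move=> i _; rewrite [A ^+ _]exprS [A ^+ _]exprS mulrA A2 !mul0r scaler0.
Qed.

Lemma mexp_sqr0 (A : 'M[C]_2) : A * A = 0 -> mexp A = 1 + A.
Proof.
move=> A2; apply/matrixP => i j; rewrite mxE.
rewrite (@lim_near_cst _ _ _ _ _ (complex.Re ((1 + A) i j))).
rewrite (@lim_near_cst _ _ _ _ _ (complex.Im ((1 + A) i j))).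
- by case: ((1 + A) i j).
all: try exact: norm_hausdorff.
all: by exists 2%N => // -[|[|n]] // _; rewrite mexp_psum_sqr0.
Qed.

Lemma B2DB3E : B2 R + B3 R = mx22 'i%C 'i%C (- 'i%C) (- 'i%C).
Proof.
by apply/matrixP => i j; rewrite !mxE; case: ifP => _; case: ifP => _; rewrite ?addr0 ?add0r.
Qed.

Lemma B2DB3_sqr0 : (B2 R + B3 R) * (B2 R + B3 R) = 0.
Proof.
rewrite B2DB3E; apply/matrixP => i j; rewrite !mxE !big_ord_recl big_ord0 !mxE /=.
by case: ifP => _; case: ifP => _; rewrite ?mulrN ?mulNr ?opprK -expr2 sqr_i; ring.
Qed.

(* diag(p, q) (1 + j [[1, 1], [-1, -1]]) *)
Definition parabolic_mx (p q j : C) : 'M[C]_2 :=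
  mx22 (p * (1 + j)) (p * j) (- (q * j)) (q * (1 - j)).

Lemma parabolic_mxD (p q j j' : C) :
  parabolic_mx p q j' = parabolic_mx p q j + (j' - j) *: mx22 p p (- q) (- q).
Proof.
by apply/matrixP => a b; rewrite !mxE; case: ifP => _; case: ifP => _; ring.
Qed.

Definition transfer_coef (E eps delta x : R) : C :=
  ('i%C * delta%:C + (eps * x)%:C) / (2 * sin (kE E))%:C.

Lemma transfer_coefB (E eps delta x y : R) :
  transfer_coef E eps delta y - transfer_coef E eps delta x =
  (y - x)%:C * (eps%:C / (2 * sin (kE E))%:C).
Proof. by rewrite /transfer_coef !rmorphM rmorphB /=; ring. Qed.

Lemma transferE (E eps delta x : R) :
  transfer E eps delta x =
  parabolic_mx (ephase (- kE E)) (ephase (kE E)) ('i%C * transfer_coef E eps delta x).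
Proof.
rewrite /transfer -/(transfer_coef E eps delta x) mexp_sqr0; last first.
  by rewrite -scalerAl -scalerAr B2DB3_sqr0 !scaler0.
rewrite B2DB3E; apply/matrixP => a b.
by case: a => [[|[|//]] ?]; case: b => [[|[|//]] ?];
  rewrite !mxE !big_ord_recl big_ord0 !mxE /= ?eqE /=; ring.
Qed.

Lemma ephase_neq0 (t : R) : ephase t != 0.
Proof.
apply/eqP => -[cos0 sin0]; have := cos2Dsin2 t.
by rewrite cos0 sin0 expr0n /= addr0 => /eqP; rewrite eq_sym oner_eq0.
Qed.

Lemma ephaseN_div_neq1 (t : R) : sin t != 0 -> ephase (- t) / ephase t != 1.
Proof.
move=> sin_neq0; rewrite -[1](divff (ephase_neq0 t)).
apply: contra sin_neq0 => /eqP/(mulIf (invr_neq0 (ephase_neq0 t))) -[_].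
by rewrite sinN => /eqP; rewrite eq_sym -addr_eq0 -mulr2n mulrn_eq0.
Qed.

Lemma sin_kE_gt0 (E : R) : -2 < E < 2 -> 0 < sin (kE E).
Proof.
move=> /andP[E_gt E_lt]; apply: sin_gt0_pi; apply/andP; split.
- by apply: acos_gt0; apply/andP; split; lra.
- by apply: acos_ltpi; apply/andP; split; lra.
Qed.

Lemma transfer_coef_inj (E eps delta : R) :
  -2 < E < 2 -> eps != 0 -> injective (transfer_coef E eps delta).
Proof.
move=> E_range eps_neq0 x y /eqP; rewrite -subr_eq0 transfer_coefB.
rewrite !mulf_eq0 invr_eq0 !fmorph_eq0 mulf_eq0 pnatr_eq0 (negPf eps_neq0).
by rewrite (gt_eqF (sin_kE_gt0 E_range)) /= orbF subr_eq0 => /eqP.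
Qed.

Lemma cmodM (a b : C) : cmod (a * b) = cmod a * cmod b.
Proof. by have := ComplexField.Normc.normcM a b; case: a; case: b. Qed.

Lemma cmod_real (r : R) : cmod r%:C = `|r|.
Proof. by rewrite /cmod /= expr0n /= addr0 sqrtr_sqr. Qed.

Lemma mxdist_addZ (A D : 'M[C]_2) (c : C) : mxdist (A + c *: D) A = cmod c * mxdist D 0.
Proof.
rewrite /mxdist mulr_sumr; apply: eq_bigr => i _; rewrite mulr_sumr.
by apply: eq_bigr => j _; rewrite !mxE subr0 [A i j + _]addrC addrK cmodM.
Qed.

Lemma transfer_dilation (E eps delta : R) : exists K, forall x y,
  mxdist (transfer E eps delta y) (transfer E eps delta x) = K * `|y - x|.
Proof.
eexists => x y; rewrite !transferE (parabolic_mxD _ _ ('i%C * transfer_coef E eps delta x)).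
rewrite -mulrBr transfer_coefB mxdist_addZ mulrCA cmodM cmod_real.
by rewrite mulrAC -mulrA mulrC.
Qed.

Lemma supp_mx_dilation (d : measure_display) (T : measurableType d) (P : probability T R)
  (w : T -> R) (g : R -> 'M[C]_2) (K x : R) :
  (forall x y, mxdist (g y) (g x) = K * `|y - x|) ->
  supp_rv P w x -> supp_mx P (fun s => g (w s)) (g x).
Proof.
move=> g_dil w_x e e_gt0; have [K_gt0|K_le0] := ltP 0 K.
  have -> : [set s | mxdist (g (w s)) (g x) < e] = [set s | `|w s - x| < e / K].
    by apply/seteqP; split => s /=; rewrite g_dil ltr_pdivlMr // mulrC.
  exact/w_x/divr_gt0.
have -> : [set s | mxdist (g (w s)) (g x) < e] = setT.
  apply/seteqP; split => s //= _; rewrite g_dil.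
  exact: le_lt_trans (mulr_le0_ge0 K_le0 (normr_ge0 _)) e_gt0.
by rewrite probability_setT lte01.
Qed.

Lemma supp_transfer (d : measure_display) (T : measurableType d) (P : probability T R)
  (w : T -> R) (E eps delta x : R) :
  supp_rv P w x -> supp_mx P (fun s => transfer E eps delta (w s)) (transfer E eps delta x).
Proof. by have [K dil] := transfer_dilation E eps delta; apply: supp_mx_dilation dil. Qed.

Definition chart (z : sphere R) : sphere R :=
  match z with
  | None => Some 0
  | Some z => if z + 1 == 0 then None else Some (z + 1)^-1
  end.

Definition unchart (w : sphere R) : sphere R :=
  match w with
  | None => Some (-1)
  | Some w => if w == 0 then None else Some (w^-1 - 1)
  end.

Definition sph_shift (t : C) : sphere R -> sphere R := omap (fun u => u + t).

Definition sph_scale (a : C) : sphere R -> sphere R := omap (fun u => a * u).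

Lemma chartK : cancel chart unchart.
Proof.
case=> [z|] /=; last by rewrite eqxx.
have [/eqP|z1_neq0] := eqVneq (z + 1) 0; first by rewrite addr_eq0 => /eqP ->.
by rewrite /= invr_eq0 (negPf z1_neq0) invrK addrK.
Qed.

Lemma unchartK : cancel unchart chart.
Proof.
case=> [w|] /=; last by rewrite addNr eqxx.
have [-> //|w_neq0] := eqVneq w 0.
by rewrite /= subrK invr_eq0 (negPf w_neq0) invrK.
Qed.

Lemma chart_eq_None (z : sphere R) : (chart z == None) = (z == Some (-1)).
Proof.
apply/eqP/eqP => [z_inf|->]; last by rewrite /= addNr eqxx.
by rewrite -(chartK z) z_inf.
Qed.

Lemma sph_shift_inj (t : C) : injective (sph_shift t).
Proof. by case=> [a|] [b|] //= [] /addIr ->. Qed.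

Lemma sph_scale_inj (a : C) : a != 0 -> injective (sph_scale a).
Proof. by move=> a_neq0; case=> [u|] [v|] //= [] /(mulfI a_neq0) ->. Qed.

Lemma mobius_parabolic_mx (p q j : C) (z : sphere R) : p != 0 -> q != 0 ->
  mobius (parabolic_mx p q j) z = sph_scale (p / q) (unchart (sph_shift (- j) (chart z))).
Proof.
move=> p_neq0 q_neq0; rewrite /mobius !mxE /=.
case: z => [z|] /=.
- have [z1_eq0|z1_neq0] := eqVneq (z + 1) 0.
  + have -> : z = -1 by apply/eqP; rewrite -subr_eq0 opprK z1_eq0.
    have -> : - (q * j) * -1 + q * (1 - j) = q by ring.
    by rewrite (negPf q_neq0) /=; congr Some; field.
  + have -> : - (q * j) * z + q * (1 - j) = q * (z + 1) * ((z + 1)^-1 - j) by field.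
    rewrite !mulf_eq0 (negPf q_neq0) (negPf z1_neq0) /=.
    have [//|w_neq0] := eqVneq ((z + 1)^-1 - j) 0.
    congr Some; field.
    have -> : 1 + - j * (z + 1) = (z + 1) * ((z + 1)^-1 - j) by field.
    by rewrite z1_neq0 mulf_neq0.
- rewrite sub0r !oppr_eq0 mulf_eq0 (negPf q_neq0) /=.
  have [//|j_neq0] := eqVneq j 0.
  by congr Some; field; rewrite j_neq0 q_neq0.
Qed.

Lemma mobius_transferE (E eps delta x : R) (z : sphere R) :
  mobius (transfer E eps delta x) z =
  sph_scale (ephase (- kE E) / ephase (kE E))
    (unchart (sph_shift (- ('i%C * transfer_coef E eps delta x)) (chart z))).
Proof. by rewrite transferE mobius_parabolic_mx ?ephase_neq0. Qed.

Lemma chart_stable_shift_pair (h : sphere R -> sphere R) (a b : C) (F : seq (sphere R)) :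
  injective h -> a != b ->
  (forall z, z \in F -> h (sph_shift a (chart z)) \in F) ->
  (forall z, z \in F -> h (sph_shift b (chart z)) \in F) ->
  forall z, z \in F -> z = Some (-1).
Proof.
move=> h_inj a_neq_b stable_a stable_b.
have ga_inj : injective (fun z => h (sph_shift a (chart z))).
  by move=> z1 z2 /h_inj/sph_shift_inj; apply: (can_inj chartK).
pose G := pmap chart F.
have stableG v : v \in G -> v + (b - a) \in G.
  rewrite mem_pmap => /mapP[z' z'F chart_z'].
  have [z zF] := mem_stable_inj_onto ga_inj stable_a (stable_b z' z'F).
  rewrite -chart_z' => /h_inj; case chart_z: (chart z) => [u|] //= -[u_eq].
  rewrite mem_pmap; suff -> : Some (v + (b - a)) = chart z by rewrite map_f.
  by rewrite chart_z; congr Some; apply: (addIr a); rewrite -u_eq addrA subrK.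
have G_nil : G = [::].
  by apply: translate_stable_seq_nil stableG; rewrite subr_eq0 eq_sym.
move=> z zF; apply/eqP; rewrite -chart_eq_None; case chart_z: (chart z) => [v|] //.
have : v \in G by rewrite mem_pmap -chart_z map_f.
by rewrite G_nil.
Qed.

End Transfer.

Theorem proposition5 (R : realType) (d : measure_display) (T : measurableType d)
  (P : probability T R) (w : {RV P >-> R}) (E delta eps : R) :
  -2 < E < 2 ->
  compact (supp_rv P w) ->
  eps != 0 ->
  (exists x y : R, supp_rv P w x /\ supp_rv P w y /\ x != y) ->
  forall F : seq (sphere R), F != [::] ->
    ~ (forall (M : 'M[R[i]]_2) (z : sphere R),
         supp_mx P (fun s => transfer E eps delta (w s)) M ->
         z \in F -> mobius M z \in F).
Proof.
move=> E_range _ eps_neq0 [x [y [x_supp [y_supp x_neq_y]]]] F F_neq_nil F_stable.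
pose om := ephase (- kE E) / ephase (kE E).
pose h := sph_scale om \o @unchart R.
pose j u := - ('i%C * transfer_coef E eps delta u).
have stable u : supp_rv P w u -> forall z, z \in F -> h (sph_shift (j u) (chart z)) \in F.
  by move=> u_supp z zF; rewrite /h /= -mobius_transferE; apply/F_stable/zF/supp_transfer.
have h_inj : injective h.
  apply: inj_comp (can_inj (@unchartK R)); apply: sph_scale_inj.
  by rewrite mulf_neq0 ?invr_eq0 ?ephase_neq0.
have j_neq : j x != j y.
  rewrite eqr_opp (inj_eq (mulfI (neq0Ci R[i]))).
  by rewrite (inj_eq (transfer_coef_inj (delta := delta) E_range eps_neq0)).
have F_pole := chart_stable_shift_pair h_inj j_neq (stable x x_supp) (stable y y_supp).
have [z0 z0F] : exists z0, z0 \in F.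
  by case: F F_neq_nil {F_stable stable F_pole} => // z0 F' _; exists z0; rewrite mem_head.
have := stable x x_supp z0 z0F; rewrite (F_pole z0 z0F) /h /= addNr eqxx /=.
move=> /F_pole/Some_inj/eqP; rewrite mulrN1 eqr_opp.
by apply/negP/ephaseN_div_neq1; rewrite gt_eqF ?sin_kE_gt0.
Qed.
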